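(* Let $G$ be a cubic graph of order $2n$ with $\chi'_{[n]}(G)=4$. Then $\chi'_{[n-1]}(G)=4$.
   Context: All graphs are finite, simple (no loops, no parallel edges), connected and cubic. For a positive integer $k$, a $[k]$-matching of $G$ is a matching of $G$ with exactly $k$ edges; an $[n]$-matching in a graph of order $2n$ is a perfect matching. The excessive $[k]$-index $\chi'_{[k]}(G)$ is the minimum number of $[k]$-matchings of $G$ whose union is $E(G)$; if some edge of $G$ lies in no $[k]$-matching, one sets $\chi'_{[k]}(G)=\infty$. *)

From mathcomp Require Import all_boot.
Set Implicit Arguments. Unset Strict Implicit. Unset Printing Implicit Defensive.

Section Graphs.
Variables (T : finType) (e : rel T).

Definition simple_graph : Prop := symmetric e /\ irreflexive e.

Definition cubic : Prop := forall x : T, #|[set y | e x y]| = 3.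

Definition connected_graph : Prop := forall x y : T, connect e x y.

Definition edges : {set {set T}} :=
  [set A : {set T} | [exists x, exists y, e x y && (A == [set x; y])]].

Definition matching (M : {set {set T}}) : bool :=
  (M \subset edges) &&
  [forall A in M, forall B in M, (A != B) ==> [disjoint A & B]].

Definition kmatching (k : nat) (M : {set {set T}}) : bool :=
  matching M && (#|M| == k).

Definition covered_by_kmatchings (k m : nat) : Prop :=
  exists Ms : seq {set {set T}},
    [/\ size Ms = m, all (kmatching k) Ms & \bigcup_(M <- Ms) M = edges].

(* If some edge lies in no [k]-matching,
   no cover exists and the index is infinity, so it equals no finite m. *)
Definition excessive_index_eq (k m : nat) : Prop :=
  covered_by_kmatchings k m /\
  forall m', m' < m -> ~ covered_by_kmatchings k m'.

End Graphs.

From mathcomp Require Import all_boot zify.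
Set Implicit Arguments. Unset Strict Implicit. Unset Printing Implicit Defensive.

(* G has 3n edges (handshake lemma), while k matchings of
   size n-1 cover at most k(n-1) edges; hence fewer than four
   [n-1]-matchings never cover E(G) (n > 0, as otherwise
   the empty family would cover E(G) = {}).

   The [n]-matchings are the perfect matchings.  If two
   perfect matchings A, B were disjoint, the edges outside A u B would
   form a third perfect matching (every vertex has degree 3), and E(G)
   would be covered by three of them.  So in a cover M1, M2, M3, M4 by
   perfect matchings, M_i and M_(i+1) share an edge p_i (indices mod 4).
   In any cover of a cubic graph by matchings each edge misses at least
   two members of the cover (the two other edges at one of its ends lie
   in distinct members avoiding it), so consecutive p_i are distinct.
   Removing p_i from M_i then leaves four [n-1]-matchings whose union is
   still E(G), as p_i survives in M_(i+1) minus p_(i+1). *)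

Lemma card_bigcup_seq (X : finType) (Ms : seq {set X}) :
  #|\bigcup_(M <- Ms) M| <= \sum_(M <- Ms) #|M|.
Proof.
elim: Ms => [|M Ms IH]; first by rewrite !big_nil cards0.
by rewrite !big_cons; apply: leq_trans (leq_card_setU M _).1 (leq_add _ IH).
Qed.

Section CubicGraphs.
Variables (T : finType) (e : rel T).
Hypotheses (simple : simple_graph e) (cub : cubic e).

Definition edges_at (u : T) : {set {set T}} := [set A in edges e | u \in A].
Definition deg_in (M : {set {set T}}) (u : T) : nat := #|edges_at u :&: M|.

Lemma in_edges_at u A : (A \in edges_at u) = (A \in edges e) && (u \in A).
Proof. by rewrite /edges_at in_set. Qed.

Lemma edge_form A : A \in edges e -> exists x y, e x y /\ A = [set x; y].
Proof. by rewrite inE => /existsP[x /existsP[y /andP[exy /eqP ->]]]; exists x, y. Qed.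

Lemma edge_in x y : e x y -> [set x; y] \in edges e.
Proof.
by move=> exy; rewrite inE; apply/existsP; exists x; apply/existsP; exists y; rewrite exy eqxx.
Qed.

Lemma card_edge A : A \in edges e -> #|A| = 2.
Proof.
case/edge_form=> x [y [exy ->]]; rewrite cards2.
by case: eqVneq exy => // ->; rewrite simple.2.
Qed.

(* The edges at u are the pairs {u, y}, one for each of its 3 neighbours. *)
Lemma card_edges_at u : #|edges_at u| = 3.
Proof.
have -> : edges_at u = [set [set u; y] | y in [set y | e u y]].
  apply/setP=> A; rewrite in_edges_at; apply/andP/imsetP => [[]|[y]].
  - case/edge_form=> x [y [exy ->]] /set2P[->|->]; first by exists y; rewrite ?inE.
    by exists x; [rewrite inE simple.1 | rewrite setUC].
  - by rewrite inE => euy ->; rewrite edge_in // set21.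
rewrite card_in_imset ?cub // => y z; rewrite !inE => euy _ E.
have : y \in [set u; z] by rewrite -E set22.
by case/set2P => // yu; move: euy; rewrite yu simple.2.
Qed.

Lemma handshake : #|edges e| * 2 = #|T| * 3.
Proof.
rewrite -!sum_nat_const.
transitivity (\sum_(A in edges e) \sum_(u in A) 1).
  by apply: eq_bigr => A /card_edge <-; rewrite sum1_card.
rewrite (exchange_big_dep predT) //=; apply: eq_bigr => u _.
by rewrite sum1_card -(card_edges_at u) cardsE.
Qed.

Lemma matching_sub M : matching e M -> M \subset edges e.
Proof. by case/andP. Qed.

Lemma matching_at_unique M u A B :
  matching e M -> A \in M -> B \in M -> u \in A -> u \in B -> A = B.
Proof.
case/andP=> _ /forallP/(_ A) disjM AM BM uA uB; apply/eqP/negPn/negP => AB.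
move: disjM; rewrite AM => /forallP/(_ B); rewrite BM AB /=.
by move/disjoint_setI0/setP/(_ u); rewrite !inE uA uB.
Qed.

Lemma deg_matching M u : matching e M -> deg_in M u <= 1.
Proof.
move=> mM; apply/card_le1_eqP => A B; rewrite !in_setI !in_edges_at.
case/andP=> /andP[_ uA] AM /andP[/andP[_ uB] BM].
exact: matching_at_unique mM BM AM uB uA.
Qed.

Lemma matching_of_deg (M : {set {set T}}) :
  M \subset edges e -> (forall u, deg_in M u <= 1) -> matching e M.
Proof.
move=> ME degM; rewrite /matching ME /=.
apply/forallP=> A; apply/implyP=> AM; apply/forallP=> B; apply/implyP=> BM.
apply/implyP=> AB; rewrite -setI_eq0; apply/eqP/setP=> u; rewrite !inE.
apply/negbTE/negP=> /andP[uA uB]; move/card_le1_eqP: (degM u) => /(_ A B).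
rewrite !in_setI !in_edges_at (subsetP ME _ AM) (subsetP ME _ BM) uA uB AM BM.
by move=> /(_ isT isT) E; rewrite E eqxx in AB.
Qed.

Lemma in_cover_deg (M : {set {set T}}) u :
  M \subset edges e -> (u \in cover M) = (0 < deg_in M u).
Proof.
move=> ME; apply/bigcupP/card_gt0P => [[A AM uA]|[A]].
  by exists A; rewrite in_setI in_edges_at (subsetP ME _ AM) uA AM.
by rewrite in_setI in_edges_at => /andP[/andP[_ uA] AM]; exists A.
Qed.

Lemma card_cover_matching M : matching e M -> #|cover M| = #|M| * 2.
Proof.
move=> mM; have trivM : trivIset M.
  apply/trivIsetP=> A B AM BM AB; case/andP: mM => _ /forallP/(_ A).
  by rewrite AM => /forallP/(_ B); rewrite BM AB.
rewrite -(eqP trivM) -sum_nat_const; apply: eq_bigr => A AM.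
exact/card_edge/(subsetP (matching_sub mM)).
Qed.

Lemma kmatching_perfect n (M : {set {set T}}) : #|T| = 2 * n ->
  kmatching e n M <-> M \subset edges e /\ forall u, deg_in M u = 1.
Proof.
move=> cardT; split=> [/andP[mM /eqP cardM]|[ME degM]].
  split=> [|u]; first exact: matching_sub.
  have : u \in cover M.
    suff -> : cover M = setT by rewrite inE.
    apply/eqP; rewrite eqEcard subsetT cardsT cardT.
    by rewrite card_cover_matching // cardM mulnC leqnn.
  by rewrite in_cover_deg ?matching_sub //; have := deg_matching u mM; lia.
have mM : matching e M by apply: matching_of_deg => // u; rewrite degM.
rewrite /kmatching mM /=; apply/eqP.
have : cover M = setT by apply/setP=> u; rewrite in_cover_deg // degM inE.
move/(congr1 (fun X : {set T} => #|X|)) => /=.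
rewrite card_cover_matching // cardsT cardT mulnC => /eqP.
by rewrite eqn_pmul2l // => /eqP.
Qed.

Lemma edges_at_sub u : edges_at u \subset edges e.
Proof. by apply/subsetP=> A; rewrite in_edges_at => /andP[]. Qed.

Lemma matching_subset (M M' : {set {set T}}) :
  M' \subset M -> matching e M -> matching e M'.
Proof.
move=> M'M mM; apply: matching_of_deg => [|u].
  exact: subset_trans M'M (matching_sub mM).
exact: leq_trans (subset_leq_card (setIS _ M'M)) (deg_matching u mM).
Qed.

Lemma kmatchingD1 k M p : kmatching e k M -> p \in M -> kmatching e k.-1 (M :\ p).
Proof.
case/andP=> mM /eqP cardM pM.
rewrite /kmatching (matching_subset (subD1set M p)) //=; apply/eqP.
by move: (cardsD1 p M); rewrite pM cardM add1n => ->.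
Qed.

(* The complement of the union of two disjoint perfect matchings is a
   perfect matching, since every vertex has degree 3 - 1 - 1 = 1 in it;
   so E(G) is then covered by three perfect matchings. *)
Lemma disjoint_perfect_cover n A B : #|T| = 2 * n ->
  kmatching e n A -> kmatching e n B -> A :&: B = set0 ->
  covered_by_kmatchings e n 3.
Proof.
move=> cardT kA kB AB.
have [AE degA] := (kmatching_perfect A cardT).1 kA.
have [BE degB] := (kmatching_perfect B cardT).1 kB.
pose R := edges e :\: (A :|: B).
have kR : kmatching e n R.
  apply/(kmatching_perfect R cardT); split=> [|u]; first exact: subsetDl.
  have degAB0 : (edges_at u :&: A) :&: (edges_at u :&: B) = set0.
    by rewrite setIACA setIid AB setI0.
  rewrite /deg_in setIDA (setIidPl (edges_at_sub u)) cardsD setIUr cardsU.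
  by rewrite degAB0 cards0 -!/(deg_in _ u) degA degB card_edges_at.
exists [:: A; B; R]; split; rewrite /= ?kA ?kB ?kR //.
have ABE : A :|: B \subset edges e by rewrite subUset AE BE.
by rewrite !big_cons big_nil setU0 setUA -[RHS](setID _ (A :|: B)) (setIidPr ABE).
Qed.

(* In a cover of E(G) by matchings, every edge g avoids at least two
   members: fix an end x of g; the two other edges at x lie in members
   of the cover ("owners") that avoid g, and distinct edges at x have
   distinct owners. *)
Lemma edge_missed_twice (Ms : seq {set {set T}}) g :
  all (matching e) Ms -> \bigcup_(M <- Ms) M = edges e -> g \in edges e ->
  1 < count (fun M : {set {set T}} => g \notin M) Ms.
Proof.
move=> /allP mMs cov gE.
have [x [y [_ gxy]]] := edge_form gE.
have xg : x \in g by rewrite gxy set21.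
pose S := edges_at x :\ g.
have cardS : #|S| = 2.
  by move: (cardsD1 g (edges_at x)); rewrite in_edges_at gE xg card_edges_at add1n => -[].
pose owner h := odflt set0 [pick M | (M \in Ms) && (h \in M)].
have ownerP h : h \in edges e -> owner h \in Ms /\ h \in owner h.
  rewrite -cov bigcup_seq => /bigcupP[M MMs hM]; rewrite /owner.
  by case: pickP => [M' /andP[]//|/(_ M)]; rewrite MMs hM.
have owner_inj : {in S &, injective owner}.
  move=> h h'; rewrite !in_setD1 !in_edges_at.
  move=> /and3P[_ hE xh] /and3P[_ h'E xh'] same.
  have [oMs oh] := ownerP h hE; have [_ oh'] := ownerP h' h'E.
  by rewrite -same in oh'; exact: matching_at_unique (mMs _ oMs) oh oh' xh xh'.
have owner_miss :
    owner @: S \subset [set M in [seq M : {set {set T}} <- Ms | g \notin M]].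
  apply/subsetP=> _ /imsetP[h + ->]; rewrite in_setD1 in_edges_at => /and3P[hg hE xh].
  have [oMs oh] := ownerP h hE; rewrite inE mem_filter oMs andbT; apply/negP=> og.
  by move: hg; rewrite (matching_at_unique (mMs _ oMs) oh og xh xg) eqxx.
have := subset_leq_card owner_miss; rewrite card_in_imset // cardS cardsE -size_filter.
by move/leq_trans; apply; exact: card_size.
Qed.

Lemma no_small_cover n m : #|T| = 2 * n -> 0 < n -> m < 4 ->
  ~ covered_by_kmatchings e n.-1 m.
Proof.
move=> cardT n_gt0 m_lt4 [Ms [sizeMs /allP kMs cov]].
have cardE : #|edges e| = 3 * n by have := handshake; rewrite cardT; lia.
have : #|edges e| <= m * n.-1.
  rewrite -cov; apply: leq_trans (card_bigcup_seq Ms) _.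
  rewrite big_seq (eq_bigr (fun=> n.-1)) => [|M /kMs/andP[_ /eqP //]].
  by rewrite -big_seq big_const_seq count_predT iter_addn_0 sizeMs mulnC.
by rewrite cardE; nia.
Qed.

Lemma perfect_matchings_meet n A B : #|T| = 2 * n ->
  ~ covered_by_kmatchings e n 3 ->
  kmatching e n A -> kmatching e n B -> exists2 p, p \in A & p \in B.
Proof.
move=> cardT no3 kA kB; have /set0Pn[p] : A :&: B != set0.
  by apply/eqP=> AB; exact: no3 (disjoint_perfect_cover cardT kA kB AB).
by rewrite in_setI => /andP[]; exists p.
Qed.
End CubicGraphs.

(* Removing from each set of a cyclic family A1, .., A4 an element p_i
   that also lies in the next set does not change the union, provided
   consecutive removed elements differ (p4 = p1 is harmless: p1 survives
   in A2). *)
Lemma bigcup_cycle_setD1 (X : finType) (A1 A2 A3 A4 : {set X}) p1 p2 p3 p4 :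
  p1 \in A2 -> p2 \in A3 -> p3 \in A4 -> p4 \in A1 ->
  p1 != p2 -> p2 != p3 -> p3 != p4 ->
  \bigcup_(A <- [:: A1 :\ p1; A2 :\ p2; A3 :\ p3; A4 :\ p4]) A =
  \bigcup_(A <- [:: A1; A2; A3; A4]) A.
Proof.
move=> p1A2 p2A3 p3A4 p4A1 p12 p23 p34.
rewrite !big_cons !big_nil; apply/setP=> x; rewrite !inE.
have [->|_] := eqVneq x p1; first by rewrite p1A2 p12 !orbT.
have [->|_] := eqVneq x p2; first by rewrite p2A3 p23 !orbT.
have [->|_] := eqVneq x p3; first by rewrite p3A4 p34 !orbT.
by have [->|_] := eqVneq x p4; rewrite ?p4A1.
Qed.

Theorem mainTheorem7 (T : finType) (e : rel T) (n : nat) :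
  simple_graph e -> connected_graph e -> cubic e ->
  #|T| = 2 * n ->
  excessive_index_eq e n 4 ->
  excessive_index_eq e n.-1 4.
Proof.
move=> simple _ cub cardT [[Ms [sizeMs kMs cov]] minimal].
(* For n = 0 there are no edges, so zero matchings would cover E(G). *)
have n_gt0 : 0 < n.
  case: n cardT minimal {kMs} => // cardT minimal; exfalso; apply: (minimal 0) => //.
  exists [::]; split=> //; rewrite big_nil; apply/esym/eqP; rewrite -cards_eq0.
  by move: (handshake simple cub); rewrite cardT; lia.
split=> [|m m_lt4]; last exact: no_small_cover.
case: Ms sizeMs kMs cov => [|M1 [|M2 [|M3 [|M4 [|]]]]] //= _ /and5P[k1 k2 k3 k4 _] cov.
have meet := perfect_matchings_meet simple cub cardT (minimal 3 isT).
have [p1 p1M1 p1M2] := meet _ _ k1 k2; have [p2 p2M2 p2M3] := meet _ _ k2 k3.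
have [p3 p3M3 p3M4] := meet _ _ k3 k4; have [p4 p4M4 p4M1] := meet _ _ k4 k1.
(* Each shared edge misses two of the M_i, so consecutive ones differ. *)
have missed M p : kmatching e n M -> p \in M ->
    1 < count (fun N : {set {set T}} => p \notin N) [:: M1; M2; M3; M4].
  case/andP=> /matching_sub /subsetP ME _ /ME; apply: edge_missed_twice => //=.
  by rewrite (andP k1).1 (andP k2).1 (andP k3).1 (andP k4).1.
have p12 : p1 != p2.
  apply: contraTneq (missed _ _ k1 p1M1) => eq12.
  by rewrite /= p1M1 p1M2 eq12 p2M3; case: (_ \notin M4).
have p23 : p2 != p3.
  apply: contraTneq (missed _ _ k2 p2M2) => eq23.
  by rewrite /= p2M2 p2M3 eq23 p3M4; case: (_ \notin M1).
have p34 : p3 != p4.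
  apply: contraTneq (missed _ _ k3 p3M3) => eq34.
  by rewrite /= p3M3 p3M4 eq34 p4M1; case: (_ \notin M2).
exists [:: M1 :\ p1; M2 :\ p2; M3 :\ p3; M4 :\ p4]; split=> //.
  by rewrite /= !kmatchingD1.
by rewrite (bigcup_cycle_setD1 p1M2 p2M3 p3M4 p4M1 p12 p23 p34).
Qed.
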